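(* Let $N, P, M, K, C$ be positive integers with $M$ dividing $P$, and put $S = P/M$. Let $\mathbf{x}_1,\dots,\mathbf{x}_N \in \mathbb{R}^P$ be fixed data points. For a vector $\mathbf{v}\in\mathbb{R}^P$ built from $M$ blocks, write $[\mathbf{v}^1;\dots;\mathbf{v}^M]$ for the vertical concatenation of the blocks $\mathbf{v}^m \in \mathbb{R}^S$. Define the following three optimal values (each is the infimum of the objective over the indicated feasible set; in every case $\mathbf{R}$ ranges over real $P\times P$ matrices with $\mathbf{R}^T\mathbf{R} = \mathbf{I}$, and the constraints on codes are imposed for all $i\in\{1,\dots,N\}$, $m\in\{1,\dots,M\}$, $c\in\{1,\dots,C\}$): (CKM) $f^*_{\mathrm{ck},M,K} = \inf \sum_{i=1}^N \big\|\mathbf{x}_i - \mathbf{R}[\mathbf{D}^1\mathbf{b}_i^1;\dots;\mathbf{D}^M\mathbf{b}_i^M]\big\|_2^2$ over $\mathbf{R}$, matrices $\mathbf{D}^m\in\mathbb{R}^{S\times K}$, and vectors $\mathbf{b}_i^m\in\{0,1\}^K$ with $\|\mathbf{b}_i^m\|_1 = 1$. (ECKM) $f^*_{\mathrm{eck},M,K,C} = \inf \sum_{i=1}^N \big\|\mathbf{x}_i - \mathbf{R}[\mathbf{D}^1\mathbf{b}_i^1;\dots;\mathbf{D}^M\mathbf{b}_i^M]\big\|_2^2$ over $\mathbf{R}$, matrices $\mathbf{D}^m\in\mathbb{R}^{S\times K}$, and vectors $\mathbf{b}_i^m\in\mathbb{Z}_{\ge 0}^K$ with $\|\mathbf{b}_i^m\|_1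 = C$. (OCKM) $f^*_{\mathrm{ock},M,K,C} = \inf \sum_{i=1}^N \big\|\mathbf{x}_i - \mathbf{R}[\textstyle\sum_{c=1}^C\mathbf{D}^{1,c}\mathbf{b}_i^{1,c};\dots;\sum_{c=1}^C\mathbf{D}^{M,c}\mathbf{b}_i^{M,c}]\big\|_2^2$ over $\mathbf{R}$, matrices $\mathbf{D}^{m,c}\in\mathbb{R}^{S\times K}$, and vectors $\mathbf{b}_i^{m,c}\in\{0,1\}^K$ with $\|\mathbf{b}_i^{m,c}\|_1 = 1$. Then $f^*_{\mathrm{ock},M,K,C} \le f^*_{\mathrm{ck},M,K}$ and $f^*_{\mathrm{ock},M,K,C} \le f^*_{\mathrm{eck},M,K,C}$.
   Context: $\|\cdot\|_2$ is the Euclidean norm, $\|\cdot\|_1$ the $\ell_1$ norm, and $\mathbb{Z}_{\ge 0}$ the set of non-negative integers. These are the optimal distortion errors of Cartesian $K$-means (CKM), extended Cartesian $K$-means (ECKM), and optimized Cartesian $K$-means (OCKM), respectively. *)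

From HB Require Import structures.
From mathcomp Require Import all_boot all_order all_algebra.
From mathcomp Require Import classical_sets reals.
Set Implicit Arguments. Unset Strict Implicit. Unset Printing Implicit Defensive.
Import Order.TTheory GRing.Theory Num.Theory.
Local Open Scope ring_scope.
Local Open Scope classical_set_scope.

Section Defs.
Variable R : realType.

Definition sqnorm (n : nat) (v : 'cV[R]_n) : R := \sum_(p < n) v p 0 ^+ 2.

Definition natcol (K : nat) (b : 'I_K -> nat) : 'cV[R]_K := \col_k (b k)%:R.

(* vertical concatenation [v^1; ...; v^M] of M blocks of size S = P/M,
   giving a vector of R^P (meaningful when M divides P and M > 0):
   entry p is entry (p mod S) of block (p div S). *)
Definition bcat (P M : nat) (blk : 'I_M -> 'cV[R]_(P %/ M)) : 'cV[R]_P :=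
  \col_(p < P)
    match (insub (p %/ (P %/ M))%N : option 'I_M),
          (insub (p %% (P %/ M))%N : option 'I_(P %/ M)) with
    | Some m, Some s => blk m s 0
    | _, _ => 0
    end.

End Defs.

Definition onehot (K : nat) (b : 'I_K -> nat) : Prop :=
  (forall k, (b k <= 1)%N) /\ (\sum_(k < K) b k)%N = 1%N.

Definition csum_code (K C : nat) (b : 'I_K -> nat) : Prop :=
  (\sum_(k < K) b k)%N = C.

Definition ckm_vals (R : realType) (N P M K : nat) (x : 'I_N -> 'cV[R]_P) : set R :=
  [set f | exists (Rm : 'M[R]_P) (D : 'I_M -> 'M[R]_(P %/ M, K))
                  (b : 'I_N -> 'I_M -> 'I_K -> nat),
     Rm^T *m Rm = 1%:M /\ (forall i m, onehot (b i m)) /\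
     f = \sum_(i < N) sqnorm (x i - Rm *m bcat (fun m => D m *m natcol R (b i m)))].

Definition eckm_vals (R : realType) (N P M K C : nat) (x : 'I_N -> 'cV[R]_P) : set R :=
  [set f | exists (Rm : 'M[R]_P) (D : 'I_M -> 'M[R]_(P %/ M, K))
                  (b : 'I_N -> 'I_M -> 'I_K -> nat),
     Rm^T *m Rm = 1%:M /\ (forall i m, csum_code C (b i m)) /\
     f = \sum_(i < N) sqnorm (x i - Rm *m bcat (fun m => D m *m natcol R (b i m)))].

Definition ockm_vals (R : realType) (N P M K C : nat) (x : 'I_N -> 'cV[R]_P) : set R :=
  [set f | exists (Rm : 'M[R]_P) (D : 'I_M -> 'I_C -> 'M[R]_(P %/ M, K))
                  (b : 'I_N -> 'I_M -> 'I_C -> 'I_K -> nat),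
     Rm^T *m Rm = 1%:M /\ (forall i m c, onehot (b i m c)) /\
     f = \sum_(i < N) sqnorm (x i - Rm *m bcat (fun m =>
                          \sum_(c < C) D m c *m natcol R (b i m c)))].
Arguments ckm_vals R N P M K x : clear implicits.
Arguments eckm_vals R N P M K C x : clear implicits.
Arguments ockm_vals R N P M K C x : clear implicits.

From HB Require Import structures.
From mathcomp Require Import all_boot all_order all_algebra.
From mathcomp Require Import classical_sets reals.

Set Implicit Arguments.
Unset Strict Implicit.
Unset Printing Implicit Defensive.
Import Order.TTheory GRing.Theory Num.Theory.
Local Open Scope ring_scope.
Local Open Scope classical_set_scope.

(* Every CKM configuration is an OCKM configuration whose dictionaries
   D^{m,c} vanish for c > 1, and every ECKM code b with |b|_1 = C is a sum of
   C one-hot codes, so an ECKM configuration is an OCKM one using the same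
   dictionary D^m for every c.  Hence the objective values of CKM and ECKM are
   objective values of OCKM, and the latter are bounded below by 0. *)

Lemma inf_le_inf_subset (R : realType) (A B : set R) :
  has_lbound A -> B !=set0 -> B `<=` A -> inf A <= inf B.
Proof. by move=> lbA neB BA; apply: lb_le_inf => // b /BA; apply: ge_inf. Qed.

Lemma sqnorm_ge0 (R : realType) n (v : 'cV[R]_n) : 0 <= sqnorm v.
Proof. by apply: sumr_ge0 => p _; apply: sqr_ge0. Qed.

Lemma eq_bcat (R : realType) P M (blk1 blk2 : 'I_M -> 'cV[R]_(P %/ M)) :
  blk1 =1 blk2 -> bcat blk1 = bcat blk2.
Proof.
move=> eq12; apply/matrixP => p j; rewrite !mxE.
by case: insub => [m|//]; case: insub => [s|//]; rewrite eq12.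
Qed.

Definition delta_code K (j : 'I_K) : 'I_K -> nat := fun k => (k == j : nat).

Lemma onehot_delta_code K (j : 'I_K) : onehot (delta_code j).
Proof.
split=> [k|]; first by rewrite /delta_code; case: (k == j).
by rewrite (bigD1 j) //= /delta_code eqxx big1 // => k /negbTE ->.
Qed.

Lemma csum_code_scale_delta K C (j : 'I_K) :
  csum_code C (fun k => C * delta_code j k)%N.
Proof.
have [_ sum_delta] := onehot_delta_code j.
by rewrite /csum_code -big_distrr /= sum_delta muln1.
Qed.

Definition code_seq K (b : 'I_K -> nat) : seq 'I_K :=
  flatten [seq nseq (b k) k | k <- enum 'I_K].

Lemma size_code_seq K (b : 'I_K -> nat) : size (code_seq b) = (\sum_(k < K) b k)%N.
Proof.
rewrite size_flatten /shape -map_comp sumnE big_map big_enum /=.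
by apply: eq_bigr => k _; rewrite /= size_nseq.
Qed.

Lemma count_code_seq K (b : 'I_K -> nat) k : count_mem k (code_seq b) = b k.
Proof.
rewrite count_flatten -map_comp sumnE big_map big_enum /=.
rewrite (bigD1 k) //= count_nseq /= eqxx mul1n big1 ?addn0 // => j /negbTE neq_jk.
by rewrite /= count_nseq /= neq_jk mul0n.
Qed.

Lemma natcol_sum_delta_code (R : realType) K C (b : 'I_K -> nat) (k0 : 'I_K) :
  csum_code C b ->
  \sum_(c < C) natcol R (delta_code (nth k0 (code_seq b) c)) = natcol R b.
Proof.
move=> sum_b; apply/matrixP => k j; rewrite summxE !mxE -count_code_seq.
rewrite -sum1_count (big_nth k0) size_code_seq sum_b big_mkord natr_sum [RHS]big_mkcond.
by apply: eq_bigr => c _; rewrite !mxE /delta_code /= eq_sym; case: (_ == _).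
Qed.

Section ObjectiveValues.
Variables (R : realType) (N P M K C : nat) (x : 'I_N -> 'cV[R]_P).

Lemma has_lbound_ockm_vals : has_lbound (ockm_vals R N P M K C x).
Proof.
by exists 0 => f [Rm [D [b [_ [_ ->]]]]]; apply: sumr_ge0 => i _; apply: sqnorm_ge0.
Qed.

Lemma ckm_vals_neq0 : (0 < K)%N -> ckm_vals R N P M K x !=set0.
Proof.
move=> K_gt0; eexists; exists 1%:M, (fun _ => 0), (fun _ _ => delta_code (Ordinal K_gt0)).
by split; [rewrite trmx1 mul1mx | split=> // *; apply: onehot_delta_code].
Qed.

Lemma eckm_vals_neq0 : (0 < K)%N -> eckm_vals R N P M K C x !=set0.
Proof.
move=> K_gt0; eexists.
exists 1%:M, (fun _ => 0), (fun _ _ k => C * delta_code (Ordinal K_gt0) k)%N.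
by split; [rewrite trmx1 mul1mx | split=> // *; apply: csum_code_scale_delta].
Qed.

Lemma ckm_vals_sub_ockm_vals :
  (0 < C)%N -> ckm_vals R N P M K x `<=` ockm_vals R N P M K C x.
Proof.
move=> C_gt0 f [Rm [D [b [RmO [hot_b ->]]]]]; pose c0 : 'I_C := Ordinal C_gt0.
exists Rm, (fun m c => if c == c0 then D m else 0), (fun i m _ => b i m).
do 2!split=> //; apply: eq_bigr => i _; congr (sqnorm (_ - Rm *m _)).
apply: eq_bcat => m; rewrite (bigD1 c0) //= ?eqxx big1 ?addr0 // => c /negbTE ->.
by rewrite mul0mx.
Qed.

Lemma eckm_vals_sub_ockm_vals :
  (0 < K)%N -> eckm_vals R N P M K C x `<=` ockm_vals R N P M K C x.
Proof.
move=> K_gt0 f [Rm [D [b [RmO [sum_b ->]]]]]; pose k0 : 'I_K := Ordinal K_gt0.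
exists Rm, (fun m _ => D m), (fun i m c => delta_code (nth k0 (code_seq (b i m)) c)).
split=> //; split=> [*|]; first exact: onehot_delta_code.
apply: eq_bigr => i _; congr (sqnorm (_ - Rm *m _)).
by apply: eq_bcat => m; rewrite -mulmx_sumr (natcol_sum_delta_code _ _ (sum_b i m)).
Qed.

End ObjectiveValues.

Theorem theorem1 (R : realType) (N P M K C : nat)
  (hN : (0 < N)%N) (hP : (0 < P)%N) (hM : (0 < M)%N) (hK : (0 < K)%N)
  (hC : (0 < C)%N) (hMP : (M %| P)%N) (x : 'I_N -> 'cV[R]_P) :
  inf (ockm_vals R N P M K C x) <= inf (ckm_vals R N P M K x) /\
  inf (ockm_vals R N P M K C x) <= inf (eckm_vals R N P M K C x).
Proof.
have lb_ockm := @has_lbound_ockm_vals R N P M K C x.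
split; apply: inf_le_inf_subset lb_ockm _ _.
- exact: ckm_vals_neq0.
- exact: ckm_vals_sub_ockm_vals.
- exact: eckm_vals_neq0.
- exact: eckm_vals_sub_ockm_vals.
Qed.
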